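(* Let $L_0\in\mathbb{R}^{n\times n}$ satisfy the incoherence condition with parameter $\mu$, let $\lambda>0$, let $S\in\mathbb{R}^{n\times n}$ be a fixed matrix, and let $0<\rho_s\le 1/2$. Consider two random models for a sparse matrix: (A) (random signs) $S_0^{A}=|S|\circ E$, where $E$ has i.i.d. entries equal to $1$ with probability $\rho_s$, $-1$ with probability $\rho_s$, and $0$ with probability $1-2\rho_s$; i.e. the locations follow the Bernoulli model with parameter $2\rho_s$ and the signs are i.i.d. symmetric $\pm1$, independent of the locations; (B) (fixed signs) $S_0^{B}=\mathcal{P}_\Omega S$, where $\Omega\sim\mathrm{Ber}(\rho_s)$. Then the probability that PCP with input $L_0+S_0^B$ is exact (its solution is $(L_0,S_0^B)$) is at least the probability that PCP with input $L_0+S_0^A$ is exact (its unique solution is $(L_0,S_0^A)$). In particular, if PCP is exact with high probability under model (A), it is exact with at least the same probability under model (B).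
   Context: PCP with parameter $\lambda$ and input $M$: minimize $\|L\|_*+\lambda\|S\|_1$ subject to $L+S=M$ ($\|\cdot\|_*$ nuclear norm, $\|S\|_1=\sum_{ij}|S_{ij}|$). $|S|$ is the entrywise absolute value and $\circ$ the entrywise (Hadamard) product. $\Omega\sim\mathrm{Ber}(\rho)$ means each $(i,j)\in[n]\times[n]$ belongs to $\Omega$ independently with probability $\rho$; $\mathcal{P}_\Omega X$ keeps entries of $X$ in $\Omega$ and zeroes the rest. Writing $L_0=U\Sigma V^*$ (reduced SVD, $U,V\in\mathbb{R}^{n\times r}$ with orthonormal columns, $r=\operatorname{rank}L_0$), incoherence with parameter $\mu$ means $\max_i\|U^*e_i\|^2\le\mu r/n$, $\max_i\|V^*e_i\|^2\le\mu r/n$, $\|UV^*\|_\infty\le\sqrt{\mu r}/n$, with $\|X\|_\infty=\max_{ij}|X_{ij}|$. *)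

From HB Require Import structures.
From mathcomp Require Import all_boot all_order all_algebra.
From mathcomp Require Import boolp classical_sets reals.
Set Implicit Arguments. Unset Strict Implicit. Unset Printing Implicit Defensive.
Import Order.TTheory GRing.Theory Num.Theory.
Local Open Scope ring_scope.

Section PCP.
Variable R : realType.

Definition is_svd (n : nat) (X : 'M[R]_n) (t : 'M[R]_n * 'rV[R]_n * 'M[R]_n) :=
  let: (U, s, V) := t in
  [/\ U^T *m U = 1%:M, V^T *m V = 1%:M, (forall k, 0 <= s 0 k)
    & X = U *m diag_mx s *m V^T].

(* singular values of X (chosen from some SVD; they are unique up to order) *)
Definition singvals (n : nat) (X : 'M[R]_n) : 'rV[R]_n :=
  (xget (1%:M, 0, 1%:M) (is_svd X)).1.2.

Definition nuclear_norm (n : nat) (X : 'M[R]_n) : R := \sum_k singvals X 0 k.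

Definition l1_norm (n : nat) (X : 'M[R]_n) : R := \sum_i \sum_j `|X i j|.

Definition pcp_obj (n : nat) (lam : R) (L S : 'M[R]_n) : R :=
  nuclear_norm L + lam * l1_norm S.

Definition pcp_exact (n : nat) (lam : R) (M L0 S0 : 'M[R]_n) : Prop :=
  L0 + S0 = M /\
  forall L S : 'M[R]_n, L + S = M -> (L, S) <> (L0, S0) ->
    pcp_obj lam L0 S0 < pcp_obj lam L S.

Definition incoherent (n : nat) (mu : R) (L0 : 'M[R]_n) : Prop :=
  exists (U V : 'M[R]_(n, \rank L0)) (sig : 'rV[R]_(\rank L0)),
    U^T *m U = 1%:M /\ V^T *m V = 1%:M /\ (forall k, 0 < sig 0 k) /\
    L0 = U *m diag_mx sig *m V^T /\
    (forall i, \sum_k U i k ^+ 2 <= mu * (\rank L0)%:R / n%:R) /\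
    (forall i, \sum_k V i k ^+ 2 <= mu * (\rank L0)%:R / n%:R) /\
    (forall i j, `|(U *m V^T) i j| <= Num.sqrt (mu * (\rank L0)%:R) / n%:R).

Definition proj_Om (n : nat) (Om : {set 'I_n * 'I_n}) (X : 'M[R]_n) : 'M[R]_n :=
  \matrix_(i, j) (if (i, j) \in Om then X i j else 0).

Definition sgn_val (e : option bool) : R :=
  match e with Some true => 1 | Some false => -1 | None => 0 end.

Definition wA (rho : R) (e : option bool) : R :=
  match e with Some _ => rho | None => 1 - 2 * rho end.

Definition probA (n : nat) (rho : R) (P : {ffun 'I_n * 'I_n -> option bool} -> Prop) : R :=
  \sum_(E : {ffun 'I_n * 'I_n -> option bool} | `[< P E >]) \prod_k wA rho (E k).

Definition S0A (n : nat) (S : 'M[R]_n) (E : {ffun 'I_n * 'I_n -> option bool}) : 'M[R]_n :=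
  \matrix_(i, j) (`|S i j| * sgn_val (E (i, j))).

Definition probB (n : nat) (rho : R) (P : {set 'I_n * 'I_n} -> Prop) : R :=
  \sum_(Om : {set 'I_n * 'I_n} | `[< P Om >])
     \prod_k (if k \in Om then rho else 1 - rho).

End PCP.

From HB Require Import structures.
From mathcomp Require Import all_boot all_order all_algebra.
From mathcomp Require Import boolp classical_sets reals.
From mathcomp Require Import lra.
Set Implicit Arguments. Unset Strict Implicit. Unset Printing Implicit Defensive.
Import Order.TTheory GRing.Theory Num.Theory.
Local Open Scope ring_scope.

(* If PCP recovers (L0, S0), it also recovers (L0, P_G S0) for any
   entry set G (elimination: shrinking the support of the sparse part keeps the
   certificate).  Take G to be the set of entries where the random sign E agrees
   with the sign of S; there P_G S0^A = P_G S.  Each entry lies in G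
   independently with probability rho, so G ~ Ber(rho) and P_G S is distributed
   as S0^B. *)

Section PCPElimination.
Variables (R : realType) (n : nat).

Lemma l1_normD (A B : 'M[R]_n) : l1_norm (A + B) <= l1_norm A + l1_norm B.
Proof.
rewrite /l1_norm -big_split /=; apply: ler_sum => i _.
rewrite -big_split /=; apply: ler_sum => j _; rewrite mxE; exact: ler_normD.
Qed.

Lemma l1_norm_proj_split (G : {set 'I_n * 'I_n}) (A : 'M[R]_n) :
  l1_norm A = l1_norm (proj_Om G A) + l1_norm (A - proj_Om G A).
Proof.
rewrite /l1_norm -big_split /=; apply: eq_bigr => i _.
rewrite -big_split /=; apply: eq_bigr => j _; rewrite !mxE.
by case: ifP => _; rewrite ?subrr ?normr0 ?add0r ?addr0 ?subr0.
Qed.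

Lemma pcp_exact_proj (lam : R) (L0 S0 : 'M[R]_n) (G : {set 'I_n * 'I_n}) :
  0 <= lam -> pcp_exact lam (L0 + S0) L0 S0 ->
  pcp_exact lam (L0 + proj_Om G S0) L0 (proj_Om G S0).
Proof.
move=> lam_ge0 [_ opt]; split => // L S eqLS neqLS.
set D := S0 - proj_Om G S0.
have feas : L + (S + D) = L0 + S0.
  by rewrite addrA eqLS /D -addrA [_ + (S0 - _)]addrC subrK.
have neq : (L, S + D) <> (L0, S0).
  case=> eL eS; apply: neqLS; congr pair => //.
  by apply: (addIr D); rewrite eS /D addrC subrK.
have := opt _ _ feas neq; rewrite /pcp_obj (l1_norm_proj_split G S0) -/D.
have tri : lam * l1_norm (S + D) <= lam * (l1_norm S + l1_norm D).
  by apply: ler_wpM2l => //; apply: l1_normD.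
rewrite mulrDr addrA => lt.
rewrite -(ltrD2r (lam * l1_norm D)); apply: (lt_le_trans lt).
by rewrite -addrA -mulrDr lerD2l.
Qed.

End PCPElimination.

Section SignAgreement.
Variables (R : realType) (n : nat) (rho : R).

Definition sign_agreement (b : 'I_n * 'I_n -> bool)
    (E : {ffun 'I_n * 'I_n -> option bool}) : {set 'I_n * 'I_n} :=
  [set k | E k == Some (b k)].

Lemma sum_wA : \sum_(e : option bool) wA rho e = 1.
Proof.
rewrite (bigD1 None) // (bigD1 (Some true)) // (bigD1 (Some false)) //=.
rewrite big_pred0; last by case=> [[]|].
rewrite /=; lra.
Qed.

Lemma wA_ge0 (e : option bool) : 0 <= rho -> rho <= 1 / 2 -> 0 <= wA rho e.
Proof. by case: e => [b|] /= rho_ge0 rho_le; lra. Qed.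

Lemma sum_wA_neq (x : bool) :
  \sum_(e : option bool | e != Some x) wA rho e = 1 - rho.
Proof. by rewrite -sum_wA [X in _ = X - _](bigD1 (Some x)) //= addrC addrK. Qed.

Lemma probA_fiber (b : 'I_n * 'I_n -> bool) (Om : {set 'I_n * 'I_n}) :
  \sum_(E | sign_agreement b E == Om) \prod_k wA rho (E k)
  = \prod_k (if k \in Om then rho else 1 - rho).
Proof.
pose Q k (e : option bool) := (e == Some (b k)) == (k \in Om).
rewrite (eq_bigl (fun E => E \in family Q)); last first.
  move=> E; apply/eqP/familyP => [agree_Om k | agree].
    by rewrite unfold_in /Q -agree_Om inE eqxx.
  by apply/setP => k; rewrite inE; have := agree k; rewrite unfold_in => /eqP.
rewrite -(bigA_distr_big_dep Q (fun _ e => wA rho e)); apply: eq_bigr => k _.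
have [kOm | kNOm] := boolP (k \in Om).
  by rewrite (big_pred1 (Some (b k))) // => e; rewrite /Q kOm eqb_id.
rewrite -(sum_wA_neq (b k)); apply: eq_bigl => e.
by rewrite /Q (negbTE kNOm) eqbF_neg.
Qed.

Lemma probA_sign_agreement (b : 'I_n * 'I_n -> bool)
    (P : {set 'I_n * 'I_n} -> Prop) :
  probA rho (fun E => P (sign_agreement b E)) = probB rho P.
Proof.
rewrite /probA /probB (partition_big (sign_agreement b) (fun Om => `[< P Om >])) //=.
apply: eq_bigr => Om POm; rewrite -(probA_fiber b Om); apply: eq_bigl => E.
by case: eqP => [->|]; rewrite ?andbT ?andbF.
Qed.

Lemma probA_le (P Q : {ffun 'I_n * 'I_n -> option bool} -> Prop) :
  0 <= rho -> rho <= 1 / 2 -> (forall E, P E -> Q E) -> probA rho P <= probA rho Q.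
Proof.
move=> rho_ge0 rho_le PQ; rewrite /probA [leRHS]big_mkcond [leLHS]big_mkcond /=.
apply: ler_sum => E _; case: asboolP => [/PQ QE | _]; first by rewrite asboolT.
by case: asboolP => _ //; apply: prodr_ge0 => k _; apply: wA_ge0.
Qed.

End SignAgreement.

Definition nonneg_pattern (R : realType) (n : nat) (S : 'M[R]_n)
  (k : 'I_n * 'I_n) : bool := 0 <= S k.1 k.2.

Lemma proj_S0A_sign_agreement (R : realType) (n : nat) (S : 'M[R]_n) E :
  proj_Om (sign_agreement (nonneg_pattern S) E) (S0A S E)
  = proj_Om (sign_agreement (nonneg_pattern S) E) S.
Proof.
apply/matrixP => i j; rewrite !mxE inE; case: eqP => //= ->; rewrite /nonneg_pattern /=.
case: (leP 0 (S i j)) => [S_ge0 | S_lt0]; first by rewrite mulr1 ger0_norm.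
by rewrite mulrN1 ltr0_norm ?opprK.
Qed.

Theorem theorem2p2 (R : realType) (n : nat) (mu lam rho : R) (L0 S : 'M[R]_n) :
  incoherent mu L0 -> 0 < lam -> 0 < rho -> rho <= 1 / 2 ->
  probA rho (fun E => pcp_exact lam (L0 + S0A S E) L0 (S0A S E))
  <= probB rho (fun Om => pcp_exact lam (L0 + proj_Om Om S) L0 (proj_Om Om S)).
Proof.
move=> _ lam_gt0 rho_gt0 rho_le.
rewrite -(probA_sign_agreement rho (nonneg_pattern S)).
apply: (probA_le (ltW rho_gt0) rho_le) => E.
move/(pcp_exact_proj (sign_agreement (nonneg_pattern S) E) (ltW lam_gt0)).
by rewrite proj_S0A_sign_agreement.
Qed.
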